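(* Let $d,m_1,\dots,m_d\in\mathbb N$ and $N=m_1\cdots m_d$. (a) For product weights $\gamma_{\mathfrak u}=\prod_{j\in\mathfrak u}\gamma_j$ (with $\gamma_j\in[0,1]$) and arbitrary real coefficients $\mathcal A(\Gamma_{m_1,\dots,m_d})$, for every $\ell\in[d]$ we have $D^*_{N,\boldsymbol\gamma}(\Gamma_{m_1,\dots,m_d},\mathcal A(\Gamma_{m_1,\dots,m_d}))\ge\frac{\gamma_\ell}{4m_\ell}$. (b) With QMC coefficients, $D^*_N(\Gamma_{m_1,\dots,m_d})=1-\prod_{j=1}^d\left(1-\frac{1}{2m_j}\right)$. (c) With QMC coefficients and arbitrary weights $\gamma_{\mathfrak u}\in[0,1]$ ($\emptyset\ne\mathfrak u\subseteq[d]$), $D^*_{N,\boldsymbol\gamma}(\Gamma_{m_1,\dots,m_d})=\max_{\emptyset\ne\mathfrak u\subseteq[d]}\gamma_{\mathfrak u}\left(1-\prod_{j\in\mathfrak u}\left(1-\frac{1}{2m_j}\right)\right)$ and $D^*_{N,\boldsymbol\gamma}(\Gamma_{m_1,\dots,m_d})\le\max_{\emptyset\ne\mathfrak u\subseteq[d]}\gamma_{\mathfrak u}\sum_{j\in\mathfrak u}\frac{1}{2m_j}$.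
   Context: Write $[d]=\{1,\dots,d\}$. The centered regular grid is $\Gamma_{m_1,\dots,m_d}=\{(\frac{2\ell_1+1}{2m_1},\dots,\frac{2\ell_d+1}{2m_d}) : \ell_j\in\{0,\dots,m_j-1\}\}$. For an $N$-point set $\mathcal P_d\subset[0,1)^d$ with real coefficients $\mathcal A(\mathcal P_d)=\{a_{\boldsymbol x}:\boldsymbol x\in\mathcal P_d\}$, the local discrepancy is $\Delta_{\mathcal P_d,\mathcal A(\mathcal P_d)}(\boldsymbol\alpha)=\sum_{\boldsymbol x\in\mathcal P_d}a_{\boldsymbol x}\mathbf 1_{[\boldsymbol 0,\boldsymbol\alpha)}(\boldsymbol x)-\prod_{j=1}^d\alpha_j$ for $\boldsymbol\alpha\in[0,1]^d$, with $[\boldsymbol 0,\boldsymbol\alpha)=[0,\alpha_1)\times\cdots\times[0,\alpha_d)$. The $\boldsymbol\gamma$-weighted star discrepancy is $D^*_{N,\boldsymbol\gamma}(\mathcal P_d,\mathcal A(\mathcal P_d))=\sup_{\boldsymbol\alpha\in[0,1]^d}\max_{\emptyset\ne\mathfrak u\subseteq[d]}\gamma_{\mathfrak u}|\Delta_{\mathcal P_d,\mathcal A(\mathcal P_d)}((\boldsymbol\alpha_{\mathfrak u},\boldsymbol 1))|$, where $(\boldsymbol\alpha_{\mathfrak u},\boldsymbol 1)=(y_1,\dots,y_d)$ with $y_j=\alpha_j$ for $j\in\mathfrak u$ and $y_j=1$ otherwise. QMC coefficients means $a_{\boldsymbol x}=1/N$ for all $\boldsymbol x$; in that case one writes $D^*_{N,\boldsymbol\gamma}(\mathcal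 P_d)$. The (unweighted) star discrepancy with QMC coefficients is $D^*_N(\mathcal P_d)=\sup_{\boldsymbol\alpha\in[0,1]^d}|\Delta_{\mathcal P_d}(\boldsymbol\alpha)|$ (the case $\gamma_{[d]}=1$, $\gamma_{\mathfrak u}=0$ for $\mathfrak u\subsetneq[d]$). *)

From HB Require Import structures.
From mathcomp Require Import all_boot all_order all_algebra.
From mathcomp Require Import classical_sets reals.
Set Implicit Arguments. Unset Strict Implicit. Unset Printing Implicit Defensive.
Import Order.TTheory GRing.Theory Num.Theory.
Local Open Scope ring_scope.
Local Open Scope classical_set_scope.

Definition grid_idx (d : nat) (m : 'I_d -> nat) : finType :=
  {dffun forall j : 'I_d, 'I_(m j)}.

Definition grid_pt (R : realType) (d : nat) (m : 'I_d -> nat)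
  (l : grid_idx m) (j : 'I_d) : R :=
  ((2 * l j + 1)%:R / (2 * m j)%:R).

Definition local_disc (R : realType) (d : nat) (m : 'I_d -> nat)
  (a : grid_idx m -> R) (alpha : 'I_d -> R) : R :=
  \sum_(l : grid_idx m | [forall j, (0 <= grid_pt R l j) && (grid_pt R l j < alpha j)]) a l
  - \prod_(j < d) alpha j.

Definition alpha_u (R : realType) (d : nat) (u : {set 'I_d}) (alpha : 'I_d -> R)
  : 'I_d -> R := fun j => if j \in u then alpha j else 1.

Definition in_unit_cube (R : realType) (d : nat) (alpha : 'I_d -> R) : Prop :=
  forall j, 0 <= alpha j <= 1.

Definition wstar_disc (R : realType) (d : nat) (m : 'I_d -> nat)
  (gamma : {set 'I_d} -> R) (a : grid_idx m -> R) : R :=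
  sup [set r : R | exists alpha : 'I_d -> R, in_unit_cube alpha /\
         exists u : {set 'I_d}, u != finset.set0 /\
           r = gamma u * `|local_disc a (alpha_u u alpha)| ].

Definition star_disc (R : realType) (d : nat) (m : 'I_d -> nat)
  (a : grid_idx m -> R) : R :=
  sup [set r : R | exists alpha : 'I_d -> R, in_unit_cube alpha /\
         r = `|local_disc a alpha| ].

Definition qmc (R : realType) (d : nat) (m : 'I_d -> nat) : grid_idx m -> R :=
  fun _ => ((\prod_(j < d) m j)%:R)^-1.

Definition prod_weights (R : realType) (d : nat) (g : 'I_d -> R) : {set 'I_d} -> R :=
  fun u => \prod_(j in u) g j.

(* The centred grid is the product of the one-dimensional midpoint grids
   {(2i+1)/(2m) : i < m}, so with QMC coefficients the empirical measure of a
   box [0, alpha) is the product of one-dimensional counting fractions; each is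
   within 1/(2 m_j) of alpha_j, and equals 1 as soon as alpha_j > 1 - 1/(2 m_j).
   Moving each factor of a product of numbers in [0,1] by at most delta_j moves
   the product by at most 1 - prod_j (1 - delta_j), and this is nearly attained
   by boxes with alpha_j slightly above 1 - 1/(2 m_j), which contain the whole
   grid but have volume close to prod_j (1 - 1/(2 m_j)).  For arbitrary
   coefficients, the slab {x_l < 1/(2 m_l)} contains no grid point, so its local
   discrepancy is minus its volume 1/(2 m_l). *)

From HB Require Import structures.
From mathcomp Require Import all_boot all_order all_algebra.
From mathcomp Require Import boolp classical_sets reals.
From mathcomp Require Import ring lra.
Set Implicit Arguments. Unset Strict Implicit. Unset Printing Implicit Defensive.
Import Order.TTheory GRing.Theory Num.Theory.
Local Open Scope ring_scope.

Lemma card_ord_ltn n k : (k <= n)%N -> #|[pred i : 'I_n | (i < k)%N]| = k.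
Proof.
move=> kn; rewrite -sum1_card -[RHS]card_ord -sum1_card.
by rewrite (big_ord_narrow_cond (P := xpredT) (F := fun=> 1%N) kn).
Qed.

Lemma down_closed_card n (P : pred 'I_n) :
  (forall i j : 'I_n, (i <= j)%N -> P j -> P i) ->
  forall i : 'I_n, P i = (i < #|P|)%N.
Proof.
move=> downP i; apply/idP/idP => [Pi | ltiP].
- rewrite -(@card_ord_ltn n i.+1) //.
  have sub : [pred j : 'I_n | (j < i.+1)%N] \subset P.
    by apply/fintype.subsetP => j; rewrite inE ltnS => /downP; apply.
  exact: subset_leq_card sub.
- apply: contraLR ltiP => nPi; rewrite -leqNgt.
  have sub : P \subset [pred j : 'I_n | (j < i)%N].
    apply/fintype.subsetP => j Pj; rewrite inE ltnNge.
    by apply: contra nPi => /downP; apply.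
  have := subset_leq_card sub.
  by rewrite (@card_ord_ltn n i) // ltnW.
Qed.

Section GridCoordinate.
Variables (R : realFieldType) (n : nat).
Hypothesis n_gt0 : (0 < n)%N.

Definition grid_count (t : R) : nat :=
  #|[pred i : 'I_n | (2 * i + 1)%:R / (2 * n)%:R < t]|.

Definition grid_frac (t : R) : R := (grid_count t)%:R / n%:R.

Let n_gt0R : (0 : R) < n%:R. Proof. by rewrite ltr0n. Qed.

Lemma midpointE (k : nat) :
  (2 * k + 1)%:R / (2 * n)%:R = k%:R / n%:R + ((2 * n)%:R)^-1 :> R.
Proof. by rewrite natrD !natrM; field; rewrite gt_eqF. Qed.

Lemma grid_count_le (t : R) : (grid_count t <= n)%N.
Proof. by rewrite -[leqRHS]card_ord max_card. Qed.

Lemma midpoint_ltE (t : R) (i : 'I_n) :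
  ((2 * i + 1)%:R / (2 * n)%:R < t) = (i < grid_count t)%N.
Proof.
apply: (@down_closed_card n [pred i : 'I_n | _ < t]) => j k jk /=.
apply: le_lt_trans; rewrite !midpointE lerD2r ler_pM2r ?invr_gt0 //.
by rewrite ler_nat.
Qed.

Lemma grid_frac_ge0 (t : R) : 0 <= grid_frac t.
Proof. by rewrite divr_ge0 ?ler0n. Qed.

Lemma grid_frac_le1 (t : R) : grid_frac t <= 1.
Proof. by rewrite ler_pdivrMr // mul1r ler_nat grid_count_le. Qed.

Lemma grid_frac_dist (t : R) : 0 <= t <= 1 ->
  `|grid_frac t - t| <= ((2 * n)%:R)^-1.
Proof.
move=> /andP[t_ge0 t_le1]; have inv2n : ((2 * n)%:R)^-1 = (n%:R)^-1 / 2 :> R.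
  by rewrite natrM invfM mulrC.
have inv_gt0 : (0 : R) < (n%:R)^-1 by rewrite invr_gt0.
rewrite ler_norml inv2n; apply/andP; split; rewrite /grid_frac.
- have [K_lt_n | K_ge_n] := ltnP (grid_count t) n.
    have := midpoint_ltE t (Ordinal K_lt_n); rewrite ltnn midpointE inv2n /= => /negbT.
    rewrite -leNgt; lra.
  have -> : grid_count t = n by apply/anti_leq; rewrite grid_count_le.
  by rewrite divff ?gt_eqF //; lra.
- case: (grid_count t) (grid_count_le t) (midpoint_ltE t) => [|k] k_lt_n ltE.
    by rewrite mul0r; lra.
  have := ltE (Ordinal k_lt_n); rewrite ltnSn midpointE inv2n /= => lt_t.
  have -> : k.+1%:R / n%:R = k%:R / n%:R + (n%:R)^-1 :> R by rewrite -natr1 mulrDl mul1r.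
  lra.
Qed.

Lemma grid_frac_eq1 (t : R) : 1 - ((2 * n)%:R)^-1 < t -> grid_frac t = 1.
Proof.
move=> t_gt; rewrite /grid_frac.
suff -> : grid_count t = n by rewrite divff ?gt_eqF.
rewrite -[RHS]card_ord; apply: eq_card => i; rewrite !inE.
apply: le_lt_trans t_gt; rewrite midpointE natrM invfM.
have : i.+1%:R / n%:R <= 1 :> R by rewrite ler_pdivrMr // mul1r ler_nat.
rewrite -natr1 mulrDl mul1r; lra.
Qed.
End GridCoordinate.

Section ProductBounds.
Variables (R : realDomainType) (I : finType) (P : pred I).

Lemma prod_sub_le_sum (f e : I -> R) :
  (forall i, 0 <= e i) -> (forall i, e i <= f i) -> (forall i, f i <= 1) ->
  \prod_(i | P i) f i - \prod_(i | P i) e i <= \sum_(i | P i) (f i - e i).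
Proof.
move=> e_ge0 le_ef f_le1.
pose K (F E S : R) : Prop := [&& 0 <= E, E <= F, F <= 1 & F - E <= S].
have /and4P[_ _ _ //] : K (\prod_(i | P i) f i) (\prod_(i | P i) e i) (\sum_(i | P i) (f i - e i)).
apply: (big_ind3 K); first by rewrite /K ler01 lexx subrr lexx.
  move=> F1 E1 S1 F2 E2 S2 /and4P[E1_ge0 E1_le ? ?] /and4P[E2_ge0 E2_le ? ?].
  have F1_ge0 := le_trans E1_ge0 E1_le; have F2_ge0 := le_trans E2_ge0 E2_le.
  by rewrite /K mulr_ge0 ?ler_pM ?mulr_ile1 //=; nra.
by move=> i _; rewrite /K e_ge0 le_ef f_le1 lexx.
Qed.

Lemma prod_sub_le (f e del : I -> R) :
  (forall i, 0 <= f i <= 1) -> (forall i, 0 <= e i <= 1) -> (forall i, 0 <= del i <= 1) ->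
  (forall i, f i - e i <= del i) ->
  \prod_(i | P i) f i - \prod_(i | P i) e i <= 1 - \prod_(i | P i) (1 - del i).
Proof.
move=> f01 e01 del01 le_fe.
pose in01 (x : R) := 0 <= x <= 1.
pose K (F E C : R) : Prop := [&& in01 F, in01 E, in01 C & F - E <= 1 - C].
have /and4P[_ _ _ //] : K (\prod_(i | P i) f i) (\prod_(i | P i) e i) (\prod_(i | P i) (1 - del i)).
apply: (big_ind3 K); first by rewrite /K /in01 ler01 lexx subrr lexx.
  move=> F1 E1 C1 F2 E2 C2.
  rewrite /K /in01 => /and4P[/andP[? ?] /andP[? ?] /andP[? ?] ?] /and4P[/andP[? ?] /andP[? ?] /andP[? ?] ?].
  rewrite !mulr_ge0 ?mulr_ile1 //=.
  (* If F_i <= E_i for some i, then F1 F2 - E1 E2 <= E_i (F_j - E_j) <= 1 - C_j;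
     otherwise 1 - C1 C2 - (F1 F2 - E1 E2) >= (F1 - E1)(1 - F2) + (F2 - E2)(1 - F1). *)
  have [F1_le_E1 | E1_lt_F1] := lerP F1 E1; nra.
move=> i _; have /andP[? ?] := del01 i; have := le_fe i.
rewrite /K /in01 f01 e01 /= => ?.
by apply/andP; split; [apply/andP; split|]; lra.
Qed.

Lemma norm_prod_sub_le (f e del : I -> R) :
  (forall i, 0 <= f i <= 1) -> (forall i, 0 <= e i <= 1) -> (forall i, 0 <= del i <= 1) ->
  (forall i, `|f i - e i| <= del i) ->
  `|\prod_(i | P i) f i - \prod_(i | P i) e i| <= 1 - \prod_(i | P i) (1 - del i).
Proof.
move=> f01 e01 del01 le_fe; rewrite ler_norml lerNl opprB.
have le_fe' i : f i - e i <= del i by have := le_fe i; rewrite ler_norml => /andP[].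
have le_ef' i : e i - f i <= del i by have := le_fe i; rewrite distrC ler_norml => /andP[].
by rewrite !prod_sub_le.
Qed.

Lemma one_sub_prod_le_sum (del : I -> R) : (forall i, 0 <= del i <= 1) ->
  1 - \prod_(i | P i) (1 - del i) <= \sum_(i | P i) del i.
Proof.
move=> del01.
have -> : \sum_(i | P i) del i = \sum_(i | P i) (1 - (1 - del i)).
  by apply: eq_bigr => i _; rewrite subKr.
apply: le_trans (@prod_sub_le_sum (fun=> 1) (fun i => 1 - del i) _ _ _); first by rewrite big1_eq.
- by move=> i; have /andP[_ ?] := del01 i; rewrite subr_ge0.
- by move=> i; have /andP[? _] := del01 i; rewrite lerBlDr lerDl.
- by move=> _.
Qed.

End ProductBounds.

Lemma approx_le_sup (R : realType) (S : set R) (b : R) : has_ubound S ->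
  (forall e, 0 < e -> exists2 x, S x & b - e <= x) -> b <= sup S.
Proof.
move=> ubS approx; apply/ler_addgt0Pr => e e_gt0.
have [x Sx le_x] := approx e e_gt0.
by rewrite -lerBlDr; apply: le_trans le_x (ub_le_sup ubS Sx).
Qed.

Section GridDiscrepancy.
Variables (R : realType) (d : nat) (m : 'I_d -> nat).

Lemma alpha_u_cube (u : {set 'I_d}) (alpha : 'I_d -> R) :
  in_unit_cube alpha -> in_unit_cube (alpha_u u alpha).
Proof. by move=> cube_alpha j; rewrite /alpha_u; case: ifP => _ //; rewrite ler01 lexx. Qed.

Lemma alpha_uT (alpha : 'I_d -> R) : alpha_u [set: 'I_d] alpha = alpha.
Proof. by apply/funext => j; rewrite /alpha_u finset.in_setT. Qed.

Lemma prod_alpha_u (F : 'I_d -> R -> R) (u : {set 'I_d}) (alpha : 'I_d -> R) :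
  (forall j, F j 1 = 1) ->
  \prod_j F j (alpha_u u alpha j) = \prod_(j in u) F j (alpha j).
Proof.
move=> F1; rewrite [RHS]big_mkcond; apply: eq_bigr => j _.
by rewrite /alpha_u; case: ifP.
Qed.

Lemma local_disc_norm_le (a : grid_idx m -> R) (alpha : 'I_d -> R) :
  in_unit_cube alpha -> `|local_disc a alpha| <= \sum_l `|a l| + 1.
Proof.
move=> cube_alpha; apply: le_trans (ler_normB _ _) _; apply: lerD.
  apply: le_trans (ler_norm_sum _ _ _) _.
  rewrite [leRHS](bigID [pred l | [forall j, (0 <= grid_pt R l j) && (grid_pt R l j < alpha j)]]) /=.
  by rewrite lerDl sumr_ge0.
have /andP[? ?] : 0 <= \prod_j alpha j <= 1.
  by rewrite prodr_ge0 ?prodr_ile1 // => j _; have /andP[] := cube_alpha j.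
by rewrite ger0_norm.
Qed.

Lemma local_disc_qmc (alpha : 'I_d -> R) :
  local_disc (@qmc R d m) alpha = \prod_j grid_frac (m j) (alpha j) - \prod_j alpha j.
Proof.
rewrite /local_disc /qmc sumr_const; congr (_ - _).
have -> : #|[pred l : grid_idx m | [forall j, (0 <= grid_pt R l j) && (grid_pt R l j < alpha j)]]|
    = #|(family (fun j => [pred i : 'I_(m j) | (2 * i + 1)%:R / (2 * m j)%:R < alpha j])
         : simpl_pred (grid_idx m))|.
  apply: eq_card => l; rewrite !inE; apply/forallP/familyP => [in_box j | in_box j].
    by have /andP[_] := in_box j; rewrite inE.
  by have := in_box j; rewrite inE /grid_pt => ->; rewrite andbT divr_ge0.
rewrite card_family foldrE big_map big_enum /= -[_^-1 *+ _]mulr_natr !natr_prod -prodfV -big_split.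
by apply: eq_bigr => j _; rewrite /grid_frac /grid_count mulrC.
Qed.

Hypothesis m_gt0 : forall j, (0 < m j)%N.

Let inv2m (j : 'I_d) : R := ((2 * m j)%:R)^-1.

Lemma inv2m_gt0 j : 0 < inv2m j.
Proof. by rewrite invr_gt0 ltr0n muln_gt0 m_gt0. Qed.

Lemma inv2m_le1 j : inv2m j <= 1.
Proof. by rewrite invf_le1 ?ltr0n ?muln_gt0 ?m_gt0 // ler1n muln_gt0 m_gt0. Qed.

Lemma local_disc_qmc_u (u : {set 'I_d}) (alpha : 'I_d -> R) :
  local_disc (@qmc R d m) (alpha_u u alpha)
  = \prod_(j in u) grid_frac (m j) (alpha j) - \prod_(j in u) alpha j.
Proof.
rewrite local_disc_qmc (prod_alpha_u (F := fun j => grid_frac (m j))) ?(prod_alpha_u (F := fun=> id)) //.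
move=> j; apply: grid_frac_eq1 => //; have := inv2m_gt0 j; rewrite /inv2m; lra.
Qed.

Lemma qmc_disc_le (u : {set 'I_d}) (alpha : 'I_d -> R) : in_unit_cube alpha ->
  `|local_disc (@qmc R d m) (alpha_u u alpha)| <= 1 - \prod_(j in u) (1 - inv2m j).
Proof.
move=> cube_alpha; rewrite local_disc_qmc_u; apply: norm_prod_sub_le => j.
- by rewrite grid_frac_ge0 grid_frac_le1.
- exact: cube_alpha.
- by rewrite (ltW (inv2m_gt0 j)) inv2m_le1.
- exact: grid_frac_dist.
Qed.

Lemma qmc_disc_approx (u : {set 'I_d}) (e : R) : 0 < e ->
  exists2 alpha, in_unit_cube alpha &
    1 - \prod_(j in u) (1 - inv2m j) - e <= `|local_disc (@qmc R d m) (alpha_u u alpha)|.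
Proof.
move=> e_gt0; have card_ge0 : 0 <= #|u|%:R :> R by rewrite ler0n.
pose s := e / (e + #|u|%:R).
have s_gt0 : 0 < s by rewrite divr_gt0 //; lra.
have s_le1 : s <= 1 by rewrite ler_pdivrMr ?mul1r; lra.
have s_card : s * #|u|%:R <= e by rewrite mulrAC ler_pdivrMr; nra.
pose alpha j := 1 - inv2m j + s * inv2m j.
have alpha_gt j : 1 - inv2m j < alpha j by rewrite ltrDl mulr_gt0 ?inv2m_gt0.
have alpha_le1 j : alpha j <= 1.
  by have := inv2m_gt0 j; have := inv2m_le1 j; rewrite /alpha; nra.
have cube_alpha : in_unit_cube alpha.
  by move=> j; have := alpha_gt j; have := inv2m_le1 j; rewrite alpha_le1 andbT; lra.
exists alpha => //; rewrite local_disc_qmc_u.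
rewrite (eq_bigr (fun=> 1) (fun j _ => grid_frac_eq1 (m_gt0 j) (alpha_gt j))) big1_eq.
have : \prod_(j in u) alpha j - \prod_(j in u) (1 - inv2m j) <= e.
  apply: le_trans (prod_sub_le_sum (fun j => j \in u) _ _ _) _ => [j|j|//|].
  - by rewrite subr_ge0 inv2m_le1.
  - exact: ltW.
  apply: le_trans s_card; rewrite mulr_natr -sumr_const; apply: ler_sum => j _.
  by rewrite /alpha addrAC subrr add0r ler_piMr ?inv2m_le1 // ltW.
have := ler_norm (1 - \prod_(j in u) alpha j); lra.
Qed.

Lemma local_disc_empty_slab (a : grid_idx m -> R) (l : 'I_d) :
  local_disc a (alpha_u [set l]%SET (fun=> inv2m l)) = - inv2m l.
Proof.
rewrite /local_disc big_pred0 => [|k]; last first.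
  apply/negbTE/negP => /forallP /(_ l) /andP[_].
  rewrite /alpha_u finset.in_set1 eqxx /grid_pt (midpointE _ (m_gt0 l)).
  by rewrite /= gtrDr ltNge divr_ge0.
by rewrite sub0r (prod_alpha_u (F := fun=> id)) // big_set1.
Qed.

Lemma wstar_disc_ge_slab (gamma : {set 'I_d} -> R) (a : grid_idx m -> R) (l : 'I_d) :
  (forall u : {set 'I_d}, u != finset.set0 -> 0 <= gamma u <= 1) ->
  gamma [set l]%SET * inv2m l <= wstar_disc gamma a.
Proof.
move=> gamma01; apply: ub_le_sup.
  exists (\sum_k `|a k| + 1) => _ [alpha [cube_alpha [u [u_neq0 ->]]]].
  have /andP[gamma_ge0 gamma_le1] := gamma01 u u_neq0.
  apply: le_trans (local_disc_norm_le a (alpha_u_cube u cube_alpha)).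
  by rewrite ler_piMl.
exists (fun=> inv2m l); split.
  by move=> j; rewrite ltW ?inv2m_gt0 ?inv2m_le1.
exists [set l]%SET; split; first by apply/finset.set0Pn; exists l; rewrite finset.in_set1.
by rewrite local_disc_empty_slab normrN gtr0_norm ?inv2m_gt0.
Qed.

Lemma star_disc_qmc : star_disc (@qmc R d m) = 1 - \prod_j (1 - inv2m j).
Proof.
have cube0 : in_unit_cube (fun _ : 'I_d => 0 : R) by move=> j; rewrite lexx ler01.
have prodT : \prod_(j in [set: 'I_d]%SET) (1 - inv2m j) = \prod_j (1 - inv2m j).
  by apply: eq_bigl => j; rewrite finset.in_setT.
have ub : ubound [set r | exists alpha, in_unit_cube alpha /\ r = `|local_disc (@qmc R d m) alpha|]
    (1 - \prod_j (1 - inv2m j)).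
  move=> _ [alpha [cube_alpha ->]].
  by have := qmc_disc_le [set: 'I_d]%SET cube_alpha; rewrite alpha_uT prodT; apply.
rewrite /star_disc; apply/le_anti/andP; split.
  by apply: ge_sup ub; exists `|local_disc (@qmc R d m) (fun=> 0)|, (fun=> 0).
apply: approx_le_sup => [|e e_gt0]; first by eexists; exact: ub.
have [alpha cube_alpha le_disc] := qmc_disc_approx [set: 'I_d]%SET e_gt0.
by exists `|local_disc (@qmc R d m) alpha|; [exists alpha | rewrite -prodT -(alpha_uT alpha)].
Qed.

Lemma wstar_disc_qmc (gamma : {set 'I_d} -> R) : (0 < d)%N ->
  (forall u : {set 'I_d}, u != finset.set0 -> 0 <= gamma u <= 1) ->
  wstar_disc gamma (@qmc R d m) =
    \big[Num.max/0]_(u : {set 'I_d} | u != finset.set0)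
       (gamma u * (1 - \prod_(j in u) (1 - inv2m j))).
Proof.
move=> d_gt0 gamma01; set M := \big[Num.max/0]_(u | _) _; rewrite /wstar_disc.
set E := (X in sup X).
have ub : ubound E M.
  move=> _ [alpha [cube_alpha [u [u_neq0 ->]]]]; apply: (bigmax_sup u) => //.
  have /andP[gamma_ge0 _] := gamma01 u u_neq0.
  by rewrite ler_wpM2l ?qmc_disc_le.
pose j0 := Ordinal d_gt0.
have j0_neq0 : [set j0]%SET != finset.set0.
  by apply/finset.set0Pn; exists j0; rewrite finset.in_set1.
have E_j0 : E (gamma [set j0]%SET * `|local_disc (@qmc R d m) (alpha_u [set j0]%SET (fun=> 0))|).
  by exists (fun=> 0); split => [j|]; [rewrite lexx ler01 | exists [set j0]%SET].
apply/le_anti/andP; split; first by apply: ge_sup ub; eexists; exact: E_j0.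
apply: bigmax_le => [|u u_neq0].
  apply: le_trans (ub_le_sup (ex_intro _ M ub) E_j0).
  by have /andP[? _] := gamma01 _ j0_neq0; rewrite mulr_ge0.
have /andP[gamma_ge0 gamma_le1] := gamma01 u u_neq0.
apply: approx_le_sup => [|e e_gt0]; first by exists M.
have [alpha cube_alpha le_disc] := qmc_disc_approx u e_gt0.
exists (gamma u * `|local_disc (@qmc R d m) (alpha_u u alpha)|); first by exists alpha; split => //; exists u.
have : gamma u * e <= e by rewrite ler_piMl // ltW.
have := ler_wpM2l gamma_ge0 le_disc; lra.
Qed.

End GridDiscrepancy.

Theorem proposition1 (R : realType) (d : nat) (m : 'I_d -> nat)
  (hd : (0 < d)%N) (hm : forall j, (0 < m j)%N) :
  (* (a) *)
  (forall (g : 'I_d -> R), (forall j, 0 <= g j <= 1) ->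
   forall (a : grid_idx m -> R) (l : 'I_d),
     g l / (4 * m l)%:R <= wstar_disc (prod_weights g) a) /\
  (* (b) *)
  (star_disc (@qmc R d m) =
     1 - \prod_(j < d) (1 - ((2 * m j)%:R)^-1)) /\
  (* (c) *)
  (forall gamma : {set 'I_d} -> R,
     (forall u : {set 'I_d}, u != finset.set0 -> 0 <= gamma u <= 1) ->
     wstar_disc gamma (@qmc R d m) =
       \big[Num.max/0]_(u : {set 'I_d} | u != finset.set0)
          (gamma u * (1 - \prod_(j in u) (1 - ((2 * m j)%:R)^-1))) /\
     wstar_disc gamma (@qmc R d m) <=
       \big[Num.max/0]_(u : {set 'I_d} | u != finset.set0)
          (gamma u * \sum_(j in u) ((2 * m j)%:R)^-1)).
Proof.
have inv2m01 j : 0 <= ((2 * m j)%:R : R)^-1 <= 1.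
  by rewrite (ltW (inv2m_gt0 R hm j)) (inv2m_le1 R hm j).
split; [|split; first exact: star_disc_qmc].
  move=> g g01 a l; have /andP[gl_ge0 _] := g01 l.
  apply: le_trans (wstar_disc_ge_slab hm a l _).
    rewrite /prod_weights big_set1 ler_wpM2l // lef_pV2 ?posrE ?ltr0n ?muln_gt0 ?hm //.
    by rewrite ler_nat leq_mul2r orbC.
  by move=> u _; rewrite /prod_weights prodr_ge0 ?prodr_ile1 // => j _; have /andP[] := g01 j.
move=> gamma gamma01; rewrite wstar_disc_qmc //; split => //.
apply: le_bigmax2 => u u_neq0; have /andP[gamma_ge0 _] := gamma01 u u_neq0.
by rewrite ler_wpM2l ?one_sub_prod_le_sum.
Qed.
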